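(* Let $\mathcal{H}$ be a set of connected subgraphs of a graph $G$. Then for every $\ell\in\mathbb{N}_0$, either there are more than $\ell$ pairwise vertex-disjoint graphs in $\mathcal{H}$, or there is a set $Q\subseteq V(G)$ with $|Q|\le(\mathrm{tw}(G)+1)\,\ell\log_2(\ell+1)$ such that $G-Q$ contains no graph of $\mathcal{H}$ (i.e. every member of $\mathcal{H}$ meets $Q$).
   Context: Graphs are finite, simple and undirected; $\mathrm{tw}$ denotes treewidth; $\log$ is base 2. *)

From Stdlib Require Import Reals.
From mathcomp Require Import all_boot.
Set Implicit Arguments. Unset Strict Implicit. Unset Printing Implicit Defensive.

Definition simple_graph (T : finType) (e : rel T) : Prop :=
  symmetric e /\ irreflexive e.

Definition connected_in (T : finType) (r : rel T) (A : {set T}) : Prop :=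
  A != set0 /\
  forall x y, x \in A -> y \in A ->
    connect [rel u v | [&& u \in A, v \in A & r u v]] x y.

Definition subgraph_of (T : finType) (e : rel T)
    (H : {set T} * {set T * T}) : Prop :=
  forall x y, (x, y) \in H.2 -> [&& e x y, x \in H.1 & y \in H.1].

Definition sg_adj (T : finType) (H : {set T} * {set T * T}) : rel T :=
  [rel x y | ((x, y) \in H.2) || ((y, x) \in H.2)].

Definition connected_subgraph (T : finType) (e : rel T)
    (H : {set T} * {set T * T}) : Prop :=
  subgraph_of e H /\ connected_in (sg_adj H) H.1.

Definition is_tree (n : nat) (t : rel 'I_n) : Prop :=
  0 < n /\ symmetric t /\ irreflexive t /\
  (forall i j : 'I_n, connect t i j) /\
  (forall c : seq 'I_n, ~~ (ucycleb t c && (2 < size c))).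

Definition tree_decomposition (T : finType) (e : rel T) (n : nat)
    (t : rel 'I_n) (B : 'I_n -> {set T}) : Prop :=
  is_tree t /\
  (forall v : T, exists i, v \in B i) /\
  (forall u v : T, e u v -> exists i, (u \in B i) && (v \in B i)) /\
  (forall v : T, connected_in t [set i | v \in B i]).

Definition has_td_bagsize (T : finType) (e : rel T) (k : nat) : Prop :=
  exists n (t : rel 'I_n) (B : 'I_n -> {set T}),
    tree_decomposition e t B /\ forall i, #|B i| <= k.

Lemma has_td_bagsize_exists (T : finType) (e : rel T) :
  exists k, has_td_bagsize e k.
Proof.
exists #|T|, 1, (fun _ _ => false), (fun _ => setT); split; last first.
  by move=> i; rewrite cardsT.
have all0 : forall i j : 'I_1, i = j.
  by move=> [[|?] ?] [[|?] ?] //; apply/val_inj.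
split; [split; [by [] | split; [by [] | split; [by [] | split]]] | split; [|split]].
- by move=> i j; rewrite (all0 i j) connect0.
- by move=> [|a [|b s]].
- by move=> v; exists ord0; rewrite inE.
- by move=> u v _; exists ord0; rewrite !inE.
- move=> v; split.
    by apply/set0Pn; exists ord0; rewrite inE.
  by move=> x y _ _; rewrite (all0 x y) connect0.
Qed.

(* "k = tw(G) + 1": k is the minimum, over all tree decompositions of G, of the
   largest bag size (this minimum exists by has_td_bagsize_exists, and is unique). *)
Definition is_tw_plus1 (T : finType) (e : rel T) (k : nat) : Prop :=
  has_td_bagsize e k /\ forall k', has_td_bagsize e k' -> k <= k'.

Definition log2 (x : R) : R := Rdiv (ln x) (ln (INR 2)).

From Stdlib Require Import Reals Lra.
From mathcomp Require Import all_boot.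
Set Implicit Arguments. Unset Strict Implicit. Unset Printing Implicit Defensive.

(* Bags of a tree decomposition that meet a connected subgraph form a subtree.
   Among finitely many subtrees of a tree one can always find a subtree [f i0]
   and a node [v] of it lying in every subtree that meets [f i0]: walk away
   from a root towards a deepest subtree.  The bag at [v] hits every member
   meeting [f i0]; the members avoiding it are disjoint from [f i0], so
   induction on [l] yields either [l + 1] disjoint members or a hitting set
   made of [l] bags, of size at most [k * l <= k * l * log2 (l + 1)]. *)

Section TreeSides.

Variables (n : nat) (t : rel 'I_n).
Hypothesis t_tree : is_tree t.

Definition cut_edge (a b : 'I_n) : rel 'I_n :=
  [rel x y | t x y && ~~ (((x == a) && (y == b)) || ((x == b) && (y == a)))].

Definition side (a b : 'I_n) : {set 'I_n} := [set x | connect (cut_edge a b) b x].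

Lemma side_root a b : b \in side a b.
Proof. by rewrite inE connect0. Qed.

Lemma sideT b : side b b = [set: 'I_n].
Proof.
have [_ [_ [t_irr [t_conn _]]]] := t_tree.
have cut_bb : cut_edge b b =2 t.
  move=> x y; rewrite /cut_edge /= orbb; case txy: (t x y) => //=.
  by apply/negP => /andP [/eqP Ex /eqP Ey]; move: txy; rewrite Ex Ey t_irr.
by apply/setP => x; rewrite !inE (eq_connect cut_bb) t_conn.
Qed.

Lemma side_edge_notin a b : t a b -> a \notin side a b.
Proof.
have [_ [_ [t_irr [_ t_acyclic]]]] := t_tree.
move=> tab; apply/negP; rewrite inE => /connectP [p p_path Ea].
case: (shortenP p_path) Ea => p' p'_path p'_uniq _ Ea {p_path}.
apply: (negP (t_acyclic (b :: p'))); apply/andP; split; last first.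
  case: p' p'_path p'_uniq Ea => [|y [|z q]] //=.
    by move=> _ _ Eab; move: tab; rewrite Eab t_irr.
  by rewrite andbT => /andP [_] + _ Ea; rewrite Ea !eqxx orbT.
rewrite /ucycleb p'_uniq andbT /= rcons_path -Ea tab andbT.
by apply: sub_path p'_path => x y /= /andP [].
Qed.

Lemma connected_side_cross a b (S : {set 'I_n}) x y :
  connected_in t S -> x \in S -> y \in S ->
  x \in side a b -> y \notin side a b -> (a \in S) && (b \in S).
Proof.
case=> _ S_conn xS yS xs ys.
have /connectP [p p_path Ey] := S_conn x y xS yS.
elim: p x xS xs p_path Ey => [|z p IH] x xS xs /=.
  by move=> _ Ey; move: ys; rewrite Ey xs.
case/andP => /and3P [_ zS txz] p_path Ey.
have [zs|zs] := boolP (z \in side a b); first exact: IH zs p_path Ey.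
have : ~~ cut_edge a b x z.
  apply: contra zs; rewrite !inE in xs * => cut_xz.
  exact: connect_trans xs (connect1 cut_xz).
rewrite /cut_edge /= txz negbK => /orP [] /andP [/eqP Exa /eqP Ezb].
  by move: zs; rewrite Ezb side_root.
by rewrite -Exa -Ezb xS zS.
Qed.

Lemma side_descend a b (S : {set 'I_n}) :
  connected_in t S -> S \subset side a b -> b \notin S ->
  exists c, [/\ t b c, c != a & S \subset side b c].
Proof.
move=> S_conn S_sub bS; case: (S_conn) => /set0Pn [x xS] _.
have := subsetP S_sub x xS; rewrite inE => /connectP [p p_path Ex].
case: (shortenP p_path) Ex => p' p'_path p'_uniq _ Ex {p_path}.
case: p' p'_path p'_uniq Ex => [|c q] /=.
  by move=> _ _ Ex; move: bS; rewrite -Ex xS.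
case/andP => /andP [tbc] + q_path.
rewrite eqxx /= => nca /and3P [+ _ _] Ex.
rewrite inE negb_or => /andP [bc bq].
have ca : c != a by apply: contra nca => /eqP ->; rewrite eqxx orbT.
exists c; split => //.
have xs : x \in side b c.
  rewrite inE Ex; apply/connectP; exists q => //.
  apply: (@sub_in_path _ [pred z | z != b]) q_path.
    move=> u v /= ub vb /andP [tuv _]; rewrite /cut_edge /= tuv.
    by rewrite (negbTE ub) (negbTE vb) andbF.
  by rewrite /= eq_sym bc; apply/allP => z zq; apply: contra bq => /eqP <-.
apply/subsetP => y yS; apply/negPn/negP => ys.
by move: bS; case/andP: (connected_side_cross S_conn xS yS xs ys) => ->.
Qed.

Lemma side_proper a b c :
  a = b \/ t a b -> t b c -> c != a -> side b c \proper side a b.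
Proof.
move=> ab tbc ca; have [_ [_ [t_irr _]]] := t_tree.
have ns_b z : connect (cut_edge b c) c z -> z != b.
  move=> cz; apply/eqP => Ez; have := side_edge_notin tbc.
  by rewrite Ez in cz; rewrite inE cz.
have ns_a z : connect (cut_edge b c) c z -> z != a.
  move=> cz; apply/eqP => Ez; case: ab => [Eab|tab].
    by move: (ns_b z cz); rewrite Ez Eab eqxx.
  have cut_ab : cut_edge b c a b.
    rewrite /cut_edge /= tab (eq_sym a c) (negbTE ca) orbF.
    by apply/negP => /andP [/eqP Eab _]; move: tab; rewrite Eab t_irr.
  rewrite Ez in cz; have := ns_b b (connect_trans cz (connect1 cut_ab)).
  by rewrite eqxx.
have cb : c != b by apply: contraTneq tbc => ->; rewrite t_irr.
apply/properP; split; last first.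
  by exists b; [apply: side_root | rewrite inE; apply/negP => /ns_b; rewrite eqxx].
apply/subsetP => x; rewrite !inE => /connectP [p p_path ->].
have cut_bc : cut_edge a b b c by rewrite /cut_edge /= tbc (negbTE cb) (negbTE ca) !andbF.
apply: (connect_trans (connect1 cut_bc)); apply/connectP; exists p => //.
have p_side : all [pred z | connect (cut_edge b c) c z] (c :: p).
  by apply/allP => z zp; apply: (path_connect p_path zp).
apply: (sub_in_path _ p_side p_path) => u v /= cu _ /andP [tuv _].
by rewrite /cut_edge /= tuv (negbTE (ns_a u cu)) (negbTE (ns_b u cu)).
Qed.

Lemma subtree_anchor (I : finType) (f : I -> {set 'I_n}) (F : {set I}) :
  {in F, forall i, connected_in t (f i)} -> F != set0 ->
  exists i0 v, [/\ i0 \in F, v \in f i0 &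
    {in F, forall i, f i :&: f i0 != set0 -> v \in f i}].
Proof.
move=> F_conn /set0Pn [i1 i1F].
suff descend m a b : #|side a b| <= m -> a = b \/ t a b ->
    [exists i in F, f i \subset side a b] ->
    exists i0 v, [/\ i0 \in F, v \in f i0 &
      {in F, forall i, f i :&: f i0 != set0 -> v \in f i}].
  have [/set0Pn [b _] _] := F_conn i1 i1F.
  apply: (descend _ b b (leqnn _) (or_introl erefl)).
  by apply/exists_inP; exists i1; rewrite // sideT subsetT.
elim: m a b => [|m IH] a b.
  by rewrite leqn0 cards_eq0 => /eqP side0; have := side_root a b; rewrite side0 inE.
move=> size_ab ab /exists_inP [i0 i0F sub0].
have [/existsP [c /and3P [tbc ca deeper]]|none] :=
  boolP [exists c, [&& t b c, c != a & [exists i in F, f i \subset side b c]]].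
  apply: (IH b c _ (or_intror tbc) deeper).
  by rewrite -ltnS (leq_trans (proper_card (side_proper ab tbc ca))).
have b_in : {in F, forall i, f i \subset side a b -> b \in f i}.
  move=> i iF sub; apply/negPn/negP => bi.
  have [c [tbc ca subc]] := side_descend (F_conn i iF) sub bi.
  apply: (negP none); apply/existsP; exists c; rewrite tbc ca /=.
  by apply/exists_inP; exists i.
exists i0, b; split=> [//||i iF /set0Pn [x /setIP [xi xi0]]]; first exact: b_in.
have [sub|/subsetPn [y yi ys]] := boolP (f i \subset side a b); first exact: b_in.
by case/andP: (connected_side_cross (F_conn i iF) xi yi (subsetP sub0 x xi0) ys).
Qed.

End TreeSides.

Lemma connect_in_subset (T : finType) (r : rel T) (A A' : {set T}) x y :
  A \subset A' ->
  connect [rel u v | [&& u \in A, v \in A & r u v]] x y ->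
  connect [rel u v | [&& u \in A', v \in A' & r u v]] x y.
Proof.
move=> sub; apply: connect_sub => u v /= /and3P [uA vA ruv].
by apply: connect1; rewrite /= (subsetP sub _ uA) (subsetP sub _ vA).
Qed.

Section TreeDecomposition.

Variables (T : finType) (n : nat) (t : rel 'I_n) (B : 'I_n -> {set T}).
Hypothesis bags_cover : forall v : T, exists i, v \in B i.

Definition trace (A : {set T}) : {set 'I_n} := [set i | A :&: B i != set0].

Lemma mem_trace (A : {set T}) v i : v \in A -> v \in B i -> i \in trace A.
Proof. by move=> vA vi; rewrite inE; apply/set0Pn; exists v; apply/setIP. Qed.

Lemma trace_meet (A A' : {set T}) : A :&: A' != set0 -> trace A :&: trace A' != set0.
Proof.
case/set0Pn => v /setIP [vA vA']; have [i vi] := bags_cover v.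
by apply/set0Pn; exists i; rewrite inE !(mem_trace _ vi).
Qed.

Hypothesis bags_connected : forall v : T, connected_in t [set i | v \in B i].

Lemma trace_connected (r : rel T) (A : {set T}) :
  (forall u v, r u v -> exists i, (u \in B i) && (v \in B i)) ->
  connected_in r A -> connected_in t (trace A).
Proof.
move=> r_bags [/set0Pn [u uA] A_conn].
have sub_trace v : v \in A -> [set i | v \in B i] \subset trace A.
  by move=> vA; apply/subsetP => i; rewrite inE => /(mem_trace vA).
have bag_path v i j : v \in A -> v \in B i -> v \in B j ->
    connect [rel x y | [&& x \in trace A, y \in trace A & t x y]] i j.
  move=> vA vi vj; apply: (connect_in_subset (sub_trace v vA)).
  by case: (bags_connected v) => _; apply; rewrite inE.
split; first by have [i ui] := bags_cover u; apply/set0Pn; exists i; apply: mem_trace ui.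
move=> i j; rewrite !inE => /set0Pn [x /setIP [xA xi]] /set0Pn [y /setIP [yA yj]].
have /connectP [p p_path Ey] := A_conn x y xA yA.
elim: p x xA i xi p_path Ey => [|z p IH] x xA i xi /=.
  by move=> _ Ey; rewrite Ey in yj; apply: bag_path xA xi yj.
case/andP => /and3P [_ zA rxz] p_path Ey.
have [m /andP [xm zm]] := r_bags x z rxz.
exact: connect_trans (bag_path x i m xA xi xm) (IH z zA m zm p_path Ey).
Qed.

Hypothesis t_tree : is_tree t.
Variable k : nat.
Hypothesis bag_size : forall i, #|B i| <= k.

Lemma disjoint_or_hitting (I : finType) (f : I -> {set T}) (l : nat) (F : {set I}) :
  {in F, forall i, connected_in t (trace (f i))} ->
  (exists S : {set I}, [/\ S \subset F, l < #|S| &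
      {in S &, forall i j, i != j -> [disjoint f i & f j]}])
  \/ (exists Q : {set T}, #|Q| <= k * l /\ {in F, forall i, f i :&: Q != set0}).
Proof.
elim: l F => [|l IH] F F_conn; have [->|F0] := eqVneq F set0;
  try by right; exists set0; rewrite cards0; split => // i; rewrite inE.
  have /set0Pn [i iF] := F0; left; exists [set i]; rewrite sub1set cards1 iF.
  by split => // j j'; rewrite !inE => /eqP -> /eqP ->; rewrite eqxx.
have [i0 [v [i0F vi0 anchor]]] := subtree_anchor t_tree F_conn F0.
set F' := [set i in F | f i :&: B v == set0].
have F'F : F' \subset F by apply/subsetP => i; rewrite inE => /andP [].
have F'_conn : {in F', forall i, connected_in t (trace (f i))}.
  by move=> i /(subsetP F'F); apply: F_conn.
case: (IH F' F'_conn) => [[S [SF' lS S_disj]]|[Q [Q_size Q_hit]]].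
  have F'_disj i : i \in F' -> [disjoint f i & f i0].
    rewrite inE -setI_eq0 => /andP [iF fiv]; apply: contraTT fiv => meet.
    by have := anchor i iF (trace_meet meet); rewrite inE.
  have i0S : i0 \notin S.
    by apply/negP => /(subsetP SF'); move: vi0; rewrite !inE => /negbTE ->; rewrite andbF.
  left; exists (i0 |: S); split.
  - by rewrite subUset sub1set i0F (subset_trans SF' F'F).
  - by rewrite cardsU1 i0S.
  - move=> i j; rewrite !inE => /orP [/eqP ->|iS] /orP [/eqP ->|jS]; rewrite ?eqxx //.
    + by rewrite disjoint_sym => _; apply/F'_disj/(subsetP SF').
    + by move=> _; apply/F'_disj/(subsetP SF').
    + exact: S_disj.
right; exists (B v :|: Q); split.
  by rewrite mulnS (leq_trans (leq_card_setU _ _)) ?leq_add.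
move=> i iF; rewrite setIUr setU_eq0 negb_and.
have [iF'|] := boolP (i \in F'); first by rewrite Q_hit ?orbT.
by rewrite inE iF /= => /negbTE ->.
Qed.

End TreeDecomposition.

Lemma log2_ge1 m : (2 <= m)%N -> Rle 1 (log2 (INR m)).
Proof.
move=> m2; have ln2 : Rlt 0 (ln (INR 2)) by rewrite -ln_1; apply: ln_increasing; simpl; lra.
have : Rle (ln (INR 2)) (ln (INR m)).
  have [->|lt2m] := eqVneq m 2; first exact: Rle_refl.
  left; apply: ln_increasing; first by simpl; lra.
  by apply: lt_INR; apply/ltP; rewrite ltn_neqAle eq_sym lt2m.
rewrite /log2 => ln_le; apply: (Rmult_le_reg_r _ _ _ ln2).
by rewrite /Rdiv Rmult_assoc Rinv_l; lra.
Qed.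

Lemma INR_le_mul_log2 (q k l : nat) : (q <= k * l)%N ->
  Rle (INR q) (Rmult (Rmult (INR k) (INR l)) (log2 (INR l.+1))).
Proof.
move=> /leP /le_INR; rewrite mult_INR.
case: l => [|l] q_le; first by move: q_le; rewrite /= !Rmult_0_r Rmult_0_l.
have := log2_ge1 (isT : (2 <= l.+2)%N).
have := Rmult_le_pos _ _ (pos_INR k) (pos_INR l.+1).
nra.
Qed.

Theorem lemma5p2 (T : finType) (e : rel T) (HG : simple_graph e)
    (H : {set {set T} * {set T * T}})
    (Hconn : forall h, h \in H -> connected_subgraph e h)
    (k : nat) (Hk : is_tw_plus1 e k) (l : nat) :
  (exists S : {set {set T} * {set T * T}},
      [/\ S \subset H, l < #|S| &
          forall h1 h2, h1 \in S -> h2 \in S -> h1 != h2 -> [disjoint h1.1 & h2.1]])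
  \/
  (exists Q : {set T},
      Rle (INR #|Q|) (Rmult (Rmult (INR k) (INR l)) (log2 (INR l.+1))) /\
      forall h, h \in H -> h.1 :&: Q != set0).
Proof.
have [[n [t [B [[t_tree [cover [edges bags_conn]]] bag_size]]]] _] := Hk.
have H_conn : {in H, forall h, connected_in t (trace B h.1)}.
  move=> h /Hconn [h_sub h_conn]; apply: trace_connected h_conn => // u v.
  by case/orP => /h_sub /and3P [/edges [i]]; [|rewrite andbC]; exists i.
have [family|[Q [Q_size Q_hit]]] :=
  disjoint_or_hitting cover t_tree bag_size l H_conn; first by left.
by right; exists Q; split; [apply: INR_le_mul_log2 | ].
Qed.
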